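(* Let $PV_3$ be the group with generators $\lambda_{12},\lambda_{21},\lambda_{13},\lambda_{31},\lambda_{23},\lambda_{32}$ and the six defining relations $$\lambda_{ki}\lambda_{kj}\lambda_{ij}=\lambda_{ij}\lambda_{kj}\lambda_{ki}\qquad\text{for all } \{i,j,k\}=\{1,2,3\}$$ (i.e. for every ordering $(k,i,j)$ of three distinct indices). Then there exists a group $G_3$ such that $PV_3\cong G_3\ast\mathbb{Z}$.
   Context: $PV_3$ is the pure virtual braid group on three strands (the kernel of the canonical epimorphism from the virtual braid group $VB_3$ onto the symmetric group $\Sigma_3$); the presentation above is a known presentation of it and may be taken as its definition. $\ast$ denotes the free product of groups. *)

Record Group := {
  G_car :> Type;
  G_eq : G_car -> G_car -> Prop;
  G_mul : G_car -> G_car -> G_car;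
  G_inv : G_car -> G_car;
  G_one : G_car;
  G_refl : forall x, G_eq x x;
  G_sym : forall x y, G_eq x y -> G_eq y x;
  G_trans : forall x y z, G_eq x y -> G_eq y z -> G_eq x z;
  G_mul_compat : forall x x' y y', G_eq x x' -> G_eq y y' ->
                   G_eq (G_mul x y) (G_mul x' y');
  G_inv_compat : forall x x', G_eq x x' -> G_eq (G_inv x) (G_inv x');
  G_assoc : forall x y z, G_eq (G_mul (G_mul x y) z) (G_mul x (G_mul y z));
  G_one_l : forall x, G_eq (G_mul G_one x) x;
  G_inv_l : forall x, G_eq (G_mul (G_inv x) x) G_one
}.

Arguments G_eq {g} _ _.
Arguments G_mul {g} _ _.
Arguments G_inv {g} _.
Arguments G_one {g}.

Definition is_hom (G H : Group) (f : G -> H) : Prop :=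
  (forall x y : G, G_eq x y -> G_eq (f x) (f y)) /\
  (forall x y : G, G_eq (f (G_mul x y)) (G_mul (f x) (f y))).

Definition isomorphic (G H : Group) : Prop :=
  exists (f : G -> H) (g : H -> G),
    is_hom G H f /\ is_hom H G g /\
    (forall x : G, G_eq (g (f x)) x) /\ (forall y : H, G_eq (f (g y)) y).

Inductive word (X : Type) : Type :=
  | wgen : X -> word X
  | wone : word X
  | wmul : word X -> word X -> word X
  | winv : word X -> word X.
Arguments wgen {X} _.
Arguments wone {X}.
Arguments wmul {X} _ _.
Arguments winv {X} _.

Inductive weq (X : Type) (R : word X -> word X -> Prop) : word X -> word X -> Prop :=
  | weq_rel : forall u v, R u v -> weq X R u v
  | weq_refl : forall u, weq X R u u
  | weq_sym : forall u v, weq X R u v -> weq X R v u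
  | weq_trans : forall u v w, weq X R u v -> weq X R v w -> weq X R u w
  | weq_mul : forall u u' v v', weq X R u u' -> weq X R v v' ->
                weq X R (wmul u v) (wmul u' v')
  | weq_inv : forall u u', weq X R u u' -> weq X R (winv u) (winv u')
  | weq_assoc : forall u v w, weq X R (wmul (wmul u v) w) (wmul u (wmul v w))
  | weq_one_l : forall u, weq X R (wmul wone u) u
  | weq_inv_l : forall u, weq X R (wmul (winv u) u) wone.

Definition presented (X : Type) (R : word X -> word X -> Prop) : Group :=
  {| G_car := word X;
     G_eq := weq X R;
     G_mul := wmul;
     G_inv := winv;
     G_one := wone;
     G_refl := weq_refl X R;
     G_sym := weq_sym X R;
     G_trans := weq_trans X R;
     G_mul_compat := weq_mul X R;
     G_inv_compat := weq_inv X R;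
     G_assoc := weq_assoc X R;
     G_one_l := weq_one_l X R;
     G_inv_l := weq_inv_l X R |}.

Definition no_rel (X : Type) (u v : word X) : Prop := False.
Definition Zgroup : Group := presented unit (no_rel unit).

(* Free product G * H: presentation with generators G ⊔ H and relations
   the multiplication tables (and equalities) of G and of H. *)
Inductive fp_rel (G H : Group) : word (G_car G + G_car H) -> word (G_car G + G_car H) -> Prop :=
  | fp_mulG : forall a b : G,
      fp_rel G H (wgen (inl (G_mul a b))) (wmul (wgen (inl a)) (wgen (inl b)))
  | fp_eqG : forall a b : G, G_eq a b -> fp_rel G H (wgen (inl a)) (wgen (inl b))
  | fp_mulH : forall a b : H,
      fp_rel G H (wgen (inr (G_mul a b))) (wmul (wgen (inr a)) (wgen (inr b)))
  | fp_eqH : forall a b : H, G_eq a b -> fp_rel G H (wgen (inr a)) (wgen (inr b)).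

Definition free_product (G H : Group) : Group :=
  presented (G_car G + G_car H) (fp_rel G H).

Inductive idx3 := i1 | i2 | i3.

Inductive gen6 := l12 | l21 | l13 | l31 | l23 | l32.

(* lam i j = λ_{ij} for i <> j (the diagonal value is never used). *)
Definition lam (i j : idx3) : gen6 :=
  match i, j with
  | i1, i2 => l12 | i2, i1 => l21 | i1, i3 => l13
  | i3, i1 => l31 | i2, i3 => l23 | i3, i2 => l32
  | _, _ => l12
  end.

Inductive PV3_rel : word gen6 -> word gen6 -> Prop :=
  | pv3_rel : forall k i j : idx3, k <> i -> k <> j -> i <> j ->
      PV3_rel (wmul (wmul (wgen (lam k i)) (wgen (lam k j))) (wgen (lam i j)))
              (wmul (wmul (wgen (lam i j)) (wgen (lam k j))) (wgen (lam k i))).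

Definition PV3 : Group := presented gen6 PV3_rel.

From Stdlib Require Import Setoid Morphisms List.
Import ListNotations.

(* Put t = λ13 and u1 = λ12 λ13, u2 = λ13⁻¹ λ32, u3 = λ31 λ13, u4 = λ13⁻¹ λ21,
   u5 = λ23 λ13, so that λ12 = u1 t⁻¹, λ32 = t u2, λ31 = u3 t⁻¹, λ21 = t u4 and
   λ23 = u5 t⁻¹.  Substituting these into a defining relation of PV3, the inner
   occurrences of t cancel and what is left is a relation among the u's alone,
   multiplied by t or t⁻¹ on one side.  So PV3 is the free product of the group
   G3 presented by these six relations in u1, ..., u5 with the infinite cyclic
   group generated by t: the two substitutions respect the relations and are
   mutually inverse, and every check reduces to free reduction of words. *)

#[export] Instance weq_equiv X R : Equivalence (weq X R).
Proof. split; [intros u; apply weq_refl | intros u v; apply weq_sym | intros u v w; apply weq_trans]. Qed.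
#[export] Instance wmul_proper X R : Proper (weq X R ==> weq X R ==> weq X R) (@wmul X).
Proof. intros u u' H v v' H'. apply weq_mul; auto. Qed.
#[export] Instance winv_proper X R : Proper (weq X R ==> weq X R) (@winv X).
Proof. intros u u' H. apply weq_inv; auto. Qed.

Section PresentedGroup.
Variable X : Type.
Variable R : word X -> word X -> Prop.
Local Notation E := (weq X R).

Lemma weq_inv_r u : E (wmul u (winv u)) wone.
Proof.
  transitivity (wmul (wmul (winv (winv u)) (winv u)) (wmul u (winv u))).
  - symmetry. rewrite weq_inv_l. apply weq_one_l.
  - rewrite weq_assoc, <- (weq_assoc X R (winv u) u (winv u)), weq_inv_l, weq_one_l.
    apply weq_inv_l.
Qed.

Lemma weq_one_r u : E (wmul u wone) u.
Proof.
  rewrite <- (weq_inv_l X R u), <- weq_assoc, weq_inv_r. apply weq_one_l.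
Qed.

Lemma weq_inv_of_mul_r a b : E (wmul a b) wone -> E b (winv a).
Proof.
  intros H. rewrite <- (weq_one_l X R b), <- (weq_inv_l X R a), weq_assoc, H.
  apply weq_one_r.
Qed.

Lemma weq_inv_of_mul_l a b : E (wmul a b) wone -> E a (winv b).
Proof.
  intros H. transitivity (wmul (wmul a b) (winv b)).
  - rewrite weq_assoc, weq_inv_r. symmetry; apply weq_one_r.
  - rewrite H. apply weq_one_l.
Qed.

Lemma weq_invK u : E (winv (winv u)) u.
Proof. symmetry; apply weq_inv_of_mul_r, weq_inv_l. Qed.

Lemma weq_invM a b : E (winv (wmul a b)) (wmul (winv b) (winv a)).
Proof.
  symmetry; apply weq_inv_of_mul_r.
  rewrite weq_assoc, <- (weq_assoc X R b (winv b) (winv a)), weq_inv_r, weq_one_l.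
  apply weq_inv_r.
Qed.

Lemma weq_inv1 : E (winv wone) wone.
Proof. symmetry; apply weq_inv_of_mul_r, weq_one_l. Qed.

Lemma weq_idem_one a : E (wmul a a) a -> E a wone.
Proof.
  intros H. transitivity (wmul (winv a) (wmul a a)).
  - rewrite <- weq_assoc, weq_inv_l. symmetry; apply weq_one_l.
  - rewrite H; apply weq_inv_l.
Qed.

(* A letter [(x, b)] stands for [x] if [b] and for [x⁻¹] otherwise. *)
Definition letter_inv (p : X * bool) : X * bool := (fst p, negb (snd p)).

Definition letter_word (p : X * bool) : word X :=
  if snd p then wgen (fst p) else winv (wgen (fst p)).

Fixpoint word_of_letters (l : list (X * bool)) : word X :=
  match l with [] => wone | p :: l' => wmul (letter_word p) (word_of_letters l') end.

Fixpoint letters (w : word X) : list (X * bool) :=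
  match w with
  | wgen x => [(x, true)]
  | wone => []
  | wmul u v => letters u ++ letters v
  | winv u => rev (map letter_inv (letters u))
  end.

Lemma word_of_letters_app l1 l2 :
  E (word_of_letters (l1 ++ l2)) (wmul (word_of_letters l1) (word_of_letters l2)).
Proof.
  induction l1; simpl.
  - symmetry; apply weq_one_l.
  - rewrite IHl1. symmetry; apply weq_assoc.
Qed.

Lemma letter_word_inv p : E (letter_word (letter_inv p)) (winv (letter_word p)).
Proof. destruct p as [x [|]]; simpl; [reflexivity | symmetry; apply weq_invK]. Qed.

Lemma word_of_letters_inv l :
  E (word_of_letters (rev (map letter_inv l))) (winv (word_of_letters l)).
Proof.
  induction l; simpl.
  - symmetry; apply weq_inv1.
  - rewrite word_of_letters_app, IHl. simpl.
    rewrite weq_one_r, letter_word_inv. symmetry; apply weq_invM.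
Qed.

Lemma word_of_lettersK w : E (word_of_letters (letters w)) w.
Proof.
  induction w; simpl.
  - apply weq_one_r.
  - reflexivity.
  - rewrite word_of_letters_app, IHw1, IHw2. reflexivity.
  - rewrite word_of_letters_inv, IHw. reflexivity.
Qed.

Variable X_eq_dec : forall x y : X, {x = y} + {x <> y}.

Definition reduce_cons (p : X * bool) (l : list (X * bool)) : list (X * bool) :=
  match l with
  | q :: l' => if X_eq_dec (fst p) (fst q) then
                 (if Bool.eqb (snd p) (snd q) then p :: l else l')
               else p :: l
  | [] => [p]
  end.

Fixpoint reduce (l : list (X * bool)) : list (X * bool) :=
  match l with [] => [] | p :: l' => reduce_cons p (reduce l') end.

Lemma reduce_cons_weq p l :
  E (word_of_letters (reduce_cons p l)) (wmul (letter_word p) (word_of_letters l)).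
Proof.
  destruct l as [|q l]; simpl; [reflexivity|].
  destruct (X_eq_dec (fst p) (fst q)) as [e|]; [|reflexivity].
  destruct (Bool.eqb (snd p) (snd q)) eqn:Hb; [reflexivity|].
  rewrite <- weq_assoc.
  destruct p as [x b], q as [y c]; simpl in *; subst y.
  destruct b, c; try discriminate; unfold letter_word; simpl; symmetry.
  - rewrite weq_inv_r; apply weq_one_l.
  - rewrite weq_inv_l; apply weq_one_l.
Qed.

Lemma reduce_weq l : E (word_of_letters (reduce l)) (word_of_letters l).
Proof. induction l; simpl; [reflexivity|]. rewrite reduce_cons_weq, IHl. reflexivity. Qed.

Lemma weq_of_reduce_eq u v : reduce (letters u) = reduce (letters v) -> E u v.
Proof.
  intros H. rewrite <- word_of_lettersK, <- reduce_weq, H, reduce_weq.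
  apply word_of_lettersK.
Qed.

Lemma weq_by_relation pre post r1 r2 u v : E r1 r2 ->
  reduce (letters u) = reduce (letters (wmul (wmul pre r1) post)) ->
  reduce (letters v) = reduce (letters (wmul (wmul pre r2) post)) -> E u v.
Proof.
  intros H H1 H2.
  rewrite (weq_of_reduce_eq _ _ H1), (weq_of_reduce_eq _ _ H2), H. reflexivity.
Qed.

End PresentedGroup.

Tactic Notation "by_relation" constr(dec) uconstr(pre) uconstr(post) tactic(rel) :=
  eapply (weq_by_relation _ _ dec pre post);
  [rel | vm_compute; reflexivity | vm_compute; reflexivity].

Fixpoint subst {X Y : Type} (phi : X -> word Y) (w : word X) : word Y :=
  match w with
  | wgen x => phi x
  | wone => wone
  | wmul u v => wmul (subst phi u) (subst phi v)
  | winv u => winv (subst phi u)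
  end.

Lemma subst_subst {X Y Z : Type} (phi : Y -> word Z) (psi : X -> word Y) w :
  subst phi (subst psi w) = subst (fun x => subst phi (psi x)) w.
Proof. induction w; simpl; congruence. Qed.

Lemma subst_weq X Y R S (phi : X -> word Y) :
  (forall u v, R u v -> weq Y S (subst phi u) (subst phi v)) ->
  forall u v, weq X R u v -> weq Y S (subst phi u) (subst phi v).
Proof.
  intros H u v Huv; induction Huv; simpl;
  [apply H; auto | apply weq_refl | apply weq_sym; auto | eapply weq_trans; eauto
  | apply weq_mul; auto | apply weq_inv; auto | apply weq_assoc | apply weq_one_l
  | apply weq_inv_l].
Qed.

Lemma subst_hom X Y R S (phi : X -> word Y) :
  (forall u v, R u v -> weq Y S (subst phi u) (subst phi v)) ->
  is_hom (presented X R) (presented Y S) (subst phi).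
Proof. split; [exact (subst_weq X Y R S phi H) | intros; apply weq_refl]. Qed.

Section HomFromPresented.
Variables (Y X : Type) (S : word Y -> word Y -> Prop) (R : word X -> word X -> Prop).
Local Notation E := (weq X R).
Variable h : word Y -> word X.
Hypothesis h_weq : forall u v, weq Y S u v -> E (h u) (h v).
Hypothesis h_mul : forall u v, E (h (wmul u v)) (wmul (h u) (h v)).

Lemma hom_one : E (h wone) wone.
Proof.
  apply weq_idem_one. rewrite <- h_mul. apply h_weq, weq_one_l.
Qed.

Lemma hom_inv u : E (h (winv u)) (winv (h u)).
Proof.
  apply weq_inv_of_mul_l. rewrite <- h_mul, <- hom_one. apply h_weq, weq_inv_l.
Qed.

Lemma subst_weq_hom (phi : Y -> word X) :
  (forall y, E (phi y) (h (wgen y))) -> forall w, E (subst phi w) (h w).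
Proof.
  intros Hphi w; induction w; simpl.
  - apply Hphi.
  - symmetry; apply hom_one.
  - rewrite IHw1, IHw2. symmetry; apply h_mul.
  - rewrite IHw, hom_inv. reflexivity.
Qed.

End HomFromPresented.

Lemma subst_weq_id X R (phi : X -> word X) :
  (forall x, weq X R (phi x) (wgen x)) -> forall w, weq X R (subst phi w) w.
Proof.
  apply (subst_weq_hom X X R R (fun w => w) (fun _ _ H => H) (fun _ _ => weq_refl _ _ _)).
Qed.

Section FreeProductOfPresented.
Variables (Y Z : Type) (S : word Y -> word Y -> Prop) (T : word Z -> word Z -> Prop).
Local Notation FE := (weq _ (fp_rel (presented Y S) (presented Z T))).

Lemma fp_inl_weq u v : weq Y S u v -> FE (wgen (inl u)) (wgen (inl v)).
Proof. intros H; apply weq_rel, fp_eqG, H. Qed.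

Lemma fp_inl_mul u v : FE (wgen (inl (wmul u v))) (wmul (wgen (inl u)) (wgen (inl v))).
Proof. apply weq_rel, (fp_mulG (presented Y S)). Qed.

Lemma fp_inr_weq u v : weq Z T u v -> FE (wgen (inr u)) (wgen (inr v)).
Proof. intros H; apply weq_rel, fp_eqH, H. Qed.

Lemma fp_inr_mul u v : FE (wgen (inr (wmul u v))) (wmul (wgen (inr u)) (wgen (inr v))).
Proof. apply weq_rel, (fp_mulH _ (presented Z T)). Qed.

Lemma subst_weq_inl (phi : Y -> word (word Y + word Z)) :
  (forall y, FE (phi y) (wgen (inl (wgen y)))) -> forall w, FE (subst phi w) (wgen (inl w)).
Proof. exact (subst_weq_hom Y _ S _ (fun w => wgen (inl w)) fp_inl_weq fp_inl_mul phi). Qed.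

Lemma subst_weq_inr (phi : Z -> word (word Y + word Z)) :
  (forall z, FE (phi z) (wgen (inr (wgen z)))) -> forall w, FE (subst phi w) (wgen (inr w)).
Proof. exact (subst_weq_hom Z _ T _ (fun w => wgen (inr w)) fp_inr_weq fp_inr_mul phi). Qed.

End FreeProductOfPresented.

Definition word_eq_dec (X : Type) (dec : forall x y : X, {x = y} + {x <> y}) :
  forall u v : word X, {u = v} + {u <> v}.
Proof. decide equality. Defined.

Inductive gen5 := u1 | u2 | u3 | u4 | u5.

Inductive G3_rel : word gen5 -> word gen5 -> Prop :=
  | g3_rel15 : G3_rel (wmul (wgen u1) (wgen u5)) (wmul (wgen u5) (wgen u1))
  | g3_rel12 : G3_rel (wmul (wgen u1) (wgen u2)) (wmul (wgen u2) (wgen u1))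
  | g3_rel45 : G3_rel (wmul (wgen u4) (wgen u5)) (wmul (wgen u5) (wgen u4))
  | g3_rel543 : G3_rel (wmul (wmul (wgen u5) (wgen u4)) (wgen u3))
                       (wmul (wmul (wgen u3) (wgen u4)) (wgen u5))
  | g3_rel321 : G3_rel (wmul (wmul (wgen u3) (wgen u2)) (wgen u1))
                       (wmul (wmul (wgen u1) (wgen u2)) (wgen u3))
  | g3_rel234 : G3_rel (wmul (wmul (wgen u2) (wgen u3)) (wgen u4))
                       (wmul (wmul (wgen u4) (wgen u3)) (wgen u2)).

Definition G3 : Group := presented gen5 G3_rel.

Definition gen5_eq_dec (x y : gen5) : {x = y} + {x <> y}.
Proof. decide equality. Defined.
Definition gen6_eq_dec (x y : gen6) : {x = y} + {x <> y}.
Proof. decide equality. Defined.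

Definition FPgen : Type := word gen5 + word unit.

Definition FPgen_eq_dec (x y : FPgen) : {x = y} + {x <> y}.
Proof.
  decide equality; apply word_eq_dec; [exact gen5_eq_dec | decide equality].
Defined.

Local Notation PE := (weq gen6 PV3_rel).
Local Notation FE := (weq FPgen (fp_rel G3 Zgroup)).

Definition G3_gen_image (x : gen5) : word gen6 :=
  match x with
  | u1 => wmul (wgen l12) (wgen l13)
  | u2 => wmul (winv (wgen l13)) (wgen l32)
  | u3 => wmul (wgen l31) (wgen l13)
  | u4 => wmul (winv (wgen l13)) (wgen l21)
  | u5 => wmul (wgen l23) (wgen l13)
  end.

Definition fp_gen_image (s : FPgen) : word gen6 :=
  match s with
  | inl w => subst G3_gen_image w
  | inr z => subst (fun _ => wgen l13) z
  end.

Definition fp_to_PV3 : word FPgen -> word gen6 := subst fp_gen_image.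

Definition U (x : gen5) : word FPgen := wgen (inl (wgen x)).
Definition t : word FPgen := wgen (inr (wgen tt)).

Definition PV3_gen_image (g : gen6) : word FPgen :=
  match g with
  | l13 => t
  | l12 => wmul (U u1) (winv t)
  | l32 => wmul t (U u2)
  | l31 => wmul (U u3) (winv t)
  | l21 => wmul t (U u4)
  | l23 => wmul (U u5) (winv t)
  end.

Definition PV3_to_fp : word gen6 -> word FPgen := subst PV3_gen_image.

Tactic Notation "pv3_relation" constr(k) constr(i) constr(j) :=
  apply weq_rel; apply (pv3_rel k i j); discriminate.

Lemma G3_gen_image_weq u v : weq gen5 G3_rel u v ->
  PE (subst G3_gen_image u) (subst G3_gen_image v).
Proof.
  apply subst_weq; intros u' v' [].
  - by_relation gen6_eq_dec wone (wgen l13) (pv3_relation i1 i2 i3).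
  - by_relation gen6_eq_dec (winv (wgen l13)) wone (pv3_relation i1 i3 i2).
  - by_relation gen6_eq_dec (winv (wgen l13)) wone (pv3_relation i2 i1 i3).
  - by_relation gen6_eq_dec wone (wgen l13) (pv3_relation i2 i3 i1).
  - by_relation gen6_eq_dec wone (wgen l13) (pv3_relation i3 i1 i2).
  - by_relation gen6_eq_dec (winv (wgen l13)) wone (pv3_relation i3 i2 i1).
Qed.

Lemma fp_to_PV3_hom : is_hom (free_product G3 Zgroup) PV3 fp_to_PV3.
Proof.
  apply subst_hom; intros u v Hr.
  destruct Hr as [a b|a b H|a b|a b H]; simpl.
  - reflexivity.
  - exact (G3_gen_image_weq a b H).
  - reflexivity.
  - revert H. apply subst_weq. intros ? ? [].
Qed.

Lemma subst_U_weq_rel a b : G3_rel a b -> FE (subst U a) (subst U b).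
Proof.
  intros H.
  rewrite (subst_weq_inl _ _ _ _ U (fun _ => weq_refl _ _ _) a),
          (subst_weq_inl _ _ _ _ U (fun _ => weq_refl _ _ _) b).
  apply fp_inl_weq, weq_rel, H.
Qed.

Lemma PV3_to_fp_hom : is_hom PV3 (free_product G3 Zgroup) PV3_to_fp.
Proof.
  apply subst_hom; intros u v Hr.
  destruct Hr as [k i j Hki Hkj Hij]; destruct k, i, j; try congruence.
  (* (k, i, j) = (1,2,3), (1,3,2), (2,1,3), (2,3,1), (3,1,2), (3,2,1) *)
  - by_relation FPgen_eq_dec wone (winv t) (apply subst_U_weq_rel, g3_rel15).
  - by_relation FPgen_eq_dec t wone (apply subst_U_weq_rel, g3_rel12).
  - by_relation FPgen_eq_dec t wone (apply subst_U_weq_rel, g3_rel45).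
  - by_relation FPgen_eq_dec wone (winv t) (apply subst_U_weq_rel, g3_rel543).
  - by_relation FPgen_eq_dec wone (winv t) (apply subst_U_weq_rel, g3_rel321).
  - by_relation FPgen_eq_dec t wone (apply subst_U_weq_rel, g3_rel234).
Qed.

Lemma fp_to_PV3K x : PE (fp_to_PV3 (PV3_to_fp x)) x.
Proof.
  unfold fp_to_PV3, PV3_to_fp; rewrite subst_subst.
  apply subst_weq_id; intros g.
  apply (weq_of_reduce_eq _ _ gen6_eq_dec); destruct g; vm_compute; reflexivity.
Qed.

Lemma PV3_to_fpK y : FE (PV3_to_fp (fp_to_PV3 y)) y.
Proof.
  unfold fp_to_PV3, PV3_to_fp; rewrite subst_subst.
  apply subst_weq_id; intros [w|z]; simpl; rewrite subst_subst.
  - apply subst_weq_inl; intros x.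
    apply (weq_of_reduce_eq _ _ FPgen_eq_dec); destruct x; vm_compute; reflexivity.
  - apply subst_weq_inr; intros []; reflexivity.
Qed.

Theorem proposition2p1 :
  exists G3 : Group, isomorphic PV3 (free_product G3 Zgroup).
Proof.
  exists G3, PV3_to_fp, fp_to_PV3.
  split; [exact PV3_to_fp_hom|].
  split; [exact fp_to_PV3_hom|].
  split; [exact fp_to_PV3K | exact PV3_to_fpK].
Qed.
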